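(* Let $n\ge 1$ and let $\vec a=(a_0,\dots,a_n)$ be a vector of nonnegative integers. For a vector $\vec r=(r_1,\dots,r_n)$ of nonnegative integers, set $r_0=r_{n+1}=0$ and define \[ d(\vec a,\vec r)=\sum_{i=1}^{n} r_i\,(a_i+a_{i-1}-r_{i-1}-r_i). \] Call $\vec r$ allowable if $r_i+r_{i+1}\le a_i$ for every $i=0,1,\dots,n$. Let $1\le i\le n$ and suppose that $\vec r=(r_1,\dots,r_n)$ is such that $\vec r\,'=(r_1,\dots,r_{i-1},r_i+1,r_{i+1},\dots,r_n)$ is allowable. Then \[ d(\vec a,\vec r\,')> d(\vec a,\vec r). \]
   Context: The quantity $d(\vec a,\vec r)$ is the dimension of the variety of real chain complexes $0\leftarrow A_0\xleftarrow{d_1}A_1\leftarrow\cdots\xleftarrow{d_n}A_n\leftarrow 0$ with $\dim A_i=a_i$ and $\operatorname{rank} d_i=r_i$; allowable vectors $\vec r$ are exactly the rank vectors for which such a complex exists. *)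

From mathcomp Require Import all_boot all_order all_algebra.
Set Implicit Arguments. Unset Strict Implicit. Unset Printing Implicit Defensive.
Import Order.TTheory GRing.Theory Num.Theory.

(* Conventions: a vector (a_0,...,a_n) is a function a : nat -> nat of which
   only the values a 0, ..., a n are used; a vector (r_1,...,r_n) is a function
   r : nat -> nat of which only r 1, ..., r n are used. *)

Definition rext (n : nat) (r : nat -> nat) (k : nat) : nat :=
  if (0 < k <= n)%N then r k else 0%N.

Definition dim_cc (n : nat) (a r : nat -> nat) : int :=
  (\sum_(1 <= i < n.+1)
     (rext n r i)%:Z *
       ((a i)%:Z + (a i.-1)%:Z - (rext n r i.-1)%:Z - (rext n r i)%:Z))%R.

Definition allowable (n : nat) (a r : nat -> nat) : Prop :=
  forall i : nat, (i <= n)%N -> (rext n r i + rext n r i.+1 <= a i)%N.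

Definition incr_at (i : nat) (r : nat -> nat) : nat -> nat :=
  fun k => if k == i then (r k).+1 else r k.

From mathcomp Require Import all_boot all_order all_algebra.
From mathcomp Require Import zify ring.
Set Implicit Arguments. Unset Strict Implicit. Unset Printing Implicit Defensive.
Import Order.TTheory GRing.Theory Num.Theory.

(* Raising r_i by one changes only the i-th and (i+1)-th summands of d, and the
   total change is (a_{i-1} - r'_{i-1} - r'_i) + (a_i - r'_i - r'_{i+1}) + 1,
   where r' is the raised vector; both brackets are nonnegative when r' is
   allowable. *)

Local Open Scope ring_scope.

Definition dim_term (a s : nat -> nat) (k : nat) : int :=
  (s k)%:Z * ((a k)%:Z + (a k.-1)%:Z - (s k.-1)%:Z - (s k)%:Z).

(* The summand for k = n+1 vanishes, so the range can be widened to make room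
   for the summand i+1 also when i = n. *)
Lemma dim_ccE n a r : dim_cc n a r = \sum_(1 <= k < n.+2) dim_term a (rext n r) k.
Proof.
have rext_out : rext n r n.+1 = 0%N by rewrite /rext ltnn andbF.
by rewrite big_nat_recr //= [X in _ + X]/dim_term rext_out mul0r addr0.
Qed.

Lemma rext_incr_at n r i : (0 < i <= n)%N ->
  rext n (incr_at i r) =1 incr_at i (rext n r).
Proof.
move=> i_range k; rewrite /rext /incr_at.
by case: eqP => [->|_]; rewrite ?i_range.
Qed.

Lemma eq_dim_term a s1 s2 : s1 =1 s2 -> dim_term a s1 =1 dim_term a s2.
Proof. by move=> eq_s k; rewrite /dim_term !eq_s. Qed.

Lemma dim_term_incr_at a s i k : (0 < i)%N ->
  dim_term a (incr_at i s) k =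
  dim_term a s k
  + (if k == i then (a i)%:Z + (a i.-1)%:Z - (s i.-1)%:Z - (s i)%:Z *+ 2 - 1 else 0)
  - (if k == i.+1 then (s i.+1)%:Z else 0).
Proof.
move=> i_gt0; have iP_lt_i : (i.-1 < i)%N by rewrite ltn_predL.
rewrite /dim_term /incr_at.
have [->|k_neq_i] := eqVneq k i.
  by rewrite (ltn_eqF iP_lt_i) (ltn_eqF (ltnSn i)) subr0 (intS (s i)); ring.
have [-> /=|k_neq_iS] := eqVneq k i.+1.
  by rewrite eqxx addr0 (intS (s i)); ring.
have k_pred_neq_i : k.-1 != i by apply/eqP; lia.
by rewrite (negbTE k_pred_neq_i) addr0 subr0.
Qed.

Lemma sum_dim_term_incr_at a s i m p : (0 < i)%N -> (m <= i)%N -> (i.+2 <= p)%N ->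
  \sum_(m <= k < p) dim_term a (incr_at i s) k =
  \sum_(m <= k < p) dim_term a s k
  + ((a i.-1)%:Z - (s i.-1)%:Z - (s i).+1%:Z)
  + ((a i)%:Z - (s i).+1%:Z - (s i.+1)%:Z) + 1.
Proof.
move=> i_gt0 m_le_i iS_lt_p.
under eq_bigr do rewrite dim_term_incr_at //.
rewrite sumrB big_split /= -!big_mkcond !big_nat1_eq.
rewrite m_le_i (leq_trans m_le_i (leqnSn i)) ltnW // iS_lt_p /=.
rewrite (intS (s i)); ring.
Qed.

Theorem lemma2p3 (n : nat) (a r : nat -> nat) (i : nat) :
  (1 <= n)%N -> (1 <= i <= n)%N ->
  allowable n a (incr_at i r) ->
  (dim_cc n a r < dim_cc n a (incr_at i r))%R.
Proof.
move=> _ i_range allow; have /andP[i_gt0 i_le_n] := i_range.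
rewrite !dim_ccE (eq_bigr _ (fun k _ => eq_dim_term a (rext_incr_at r i_range) k)).
rewrite sum_dim_term_incr_at //.
have iP_lt_i : (i.-1 < i)%N by rewrite ltn_predL.
have := allow i.-1 (leq_trans (leq_pred i) i_le_n).
have := allow i i_le_n.
rewrite !rext_incr_at // /incr_at prednK // eqxx (ltn_eqF iP_lt_i) (gtn_eqF (ltnSn i)).
lia.
Qed.
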